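(* Let $U\subset\mathbb{R}^2$, and let measurements be modeled by a Gaussian process with squared-exponential kernel $k(x,x')=\sigma_0^2\exp\!\left(-\frac{\|x-x'\|^2}{2l^2}\right)$ ($\sigma_0^2>0$, $l>0$) and i.i.d. additive Gaussian noise of variance $\omega^2>0$. Let $0<\Delta<\sigma_0^2$, let $x\in U$ be a test location and let $X$ be a finite collection of measurement locations (repetitions allowed). If there is a measurement location $x_i\in X$ at distance $r$ from $x$ at which $n_{\text{suff}}\ge 1$ measurements are taken, with $$r\le l\sqrt{-\log\left(\left(1+\frac{\omega^2}{n_{\text{suff}}\sigma_0^2}\right)\left(1-\frac{\Delta}{\sigma_0^2}\right)\right)},$$ then $MSE(x)\le\Delta$.
   Context: For measurement locations $X=(x_1,\dots,x_n)$ (a location repeated $m$ times means $m$ measurements there), the GP posterior variance at $x$ is $\hat\sigma^2_{x|X}=k(x,x)-\mathbf{k}(x,X)\left[\mathbf{K}(X,X)+\omega^2\mathbf{I}\right]^{-1}\mathbf{k}(X,x)$, where $\mathbf{K}(X,X)$ has entries $k(x_p,x_q)$ and $\mathbf{k}(x,X)=(k(x,x_1),\dots,k(x,x_n))$. The MSE of the GP prediction at $x$ is $MSE(x)=\hat\sigma^2_{x|X}$. *)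

From mathcomp Require Import all_boot all_order all_algebra.
From mathcomp Require Import all_classical all_reals all_analysis.
Set Implicit Arguments. Unset Strict Implicit. Unset Printing Implicit Defensive.
Import Order.TTheory GRing.Theory Num.Theory.
Local Open Scope ring_scope.

Definition sqdist {R : realType} (x y : 'rV[R]_2) : R :=
  \sum_(i < 2) (x ord0 i - y ord0 i) ^+ 2.

Definition dist2 {R : realType} (x y : 'rV[R]_2) : R := Num.sqrt (sqdist x y).

Definition se_kernel {R : realType} (s0sq l : R) (x y : 'rV[R]_2) : R :=
  s0sq * expR (- (dist2 x y ^+ 2) / (2 * l ^+ 2)).

(* GP posterior variance at x given measurement locations X : 'I_n -> R^2
   (repetitions allowed), noise variance w2:
   k(x,x) - k(x,X) [K(X,X) + w2 I]^{-1} k(X,x). *)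
Definition post_var {R : realType} (k : 'rV[R]_2 -> 'rV[R]_2 -> R) (w2 : R)
    (n : nat) (X : 'I_n -> 'rV[R]_2) (x : 'rV[R]_2) : R :=
  k x x -
  ((\row_(p < n) k x (X p)) *m
     invmx ((\matrix_(p < n, q < n) k (X p) (X q)) + w2%:M) *m
     (\col_(q < n) k (X q) x)) ord0 ord0.

Definition MSE {R : realType} (k : 'rV[R]_2 -> 'rV[R]_2 -> R) (w2 : R)
    (n : nat) (X : 'I_n -> 'rV[R]_2) (x : 'rV[R]_2) : R :=
  post_var k w2 X x.

(* Write M = K(X,X) + w2 I and k_x = k(X,x).  For every vector a,
   2 a.k_x - a^T M a <= k_x^T M^-1 k_x, since M is positive definite: the
   squared-exponential kernel is g(y) g(z) exp(y.z / l^2), and exp(y.z / l^2) is a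
   limit of nonnegative combinations of powers (y.z)^m, each a finite sum of
   rank-one kernels.  Taking a constant on the n_suff copies of x_i and optimising
   the constant gives
     MSE(x) <= s0sq - n_suff s0sq^2 exp(-r^2/l^2) / (n_suff s0sq + w2),
   and the radius condition on r is exactly what makes this at most Delta. *)

From mathcomp Require Import all_boot all_order all_algebra.
From mathcomp Require Import all_classical all_reals all_analysis.
From mathcomp Require Import ring lra.
Set Implicit Arguments. Unset Strict Implicit. Unset Printing Implicit Defensive.
Import Order.TTheory GRing.Theory Num.Theory numFieldNormedType.Exports.
Local Open Scope ring_scope.

Section QuadraticForm.
Variables (R : comPzRingType) (n : nat).
Implicit Types (b f g : 'I_n -> R) (G : 'I_n -> 'I_n -> R).

Definition qform b G : R := \sum_p \sum_q b p * b q * G p q.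

Lemma qform_sum b I (r : seq I) (P : pred I) (G : I -> 'I_n -> 'I_n -> R) :
  qform b (fun p q => \sum_(j <- r | P j) G j p q) =
  \sum_(j <- r | P j) qform b (G j).
Proof.
rewrite /qform; under eq_bigr do under eq_bigr do rewrite mulr_sumr.
by under eq_bigr do rewrite exchange_big; rewrite exchange_big.
Qed.

Lemma qformZ b c G : qform b (fun p q => c * G p q) = c * qform b G.
Proof.
rewrite /qform mulr_sumr; apply: eq_bigr => p _; rewrite mulr_sumr.
by apply: eq_bigr => q _; rewrite mulrCA.
Qed.

Lemma qform_rank1 b f : qform b (fun p q => f p * f q) = (\sum_p b p * f p) ^+ 2.
Proof.
rewrite /qform expr2 mulr_suml; apply: eq_bigr => p _; rewrite mulr_sumr.
by apply: eq_bigr => q _; ring.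
Qed.

Lemma qform_conj b g G :
  qform b (fun p q => g p * g q * G p q) = qform (fun p => b p * g p) G.
Proof. by apply: eq_bigr => p _; apply: eq_bigr => q _; ring. Qed.

Lemma mx_qformE (A : 'M[R]_n) (v : 'rV_n) :
  (v *m A *m v^T) 0 0 = qform (v 0) (fun p q => A p q).
Proof.
rewrite /qform mxE exchange_big; apply: eq_bigr => p _.
by rewrite !mxE mulr_suml; apply: eq_bigr => q _; ring.
Qed.

End QuadraticForm.

Section PsdMatrix.
Variables (R : realFieldType) (n : nat).
Implicit Types (A G : 'M[R]_n) (u v : 'rV[R]_n).

Definition psdmx A := forall v, 0 <= (v *m A *m v^T) 0 0.

Lemma mx_quad_add_scalar G w v :
  (v *m (G + w%:M) *m v^T) 0 0 = (v *m G *m v^T) 0 0 + w * \sum_p v 0 p ^+ 2.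
Proof.
rewrite mulmxDr mul_mx_scalar mulmxDl mxE; congr (_ + _).
by rewrite -scalemxAl !mxE; congr (_ * _); apply: eq_bigr => p _; rewrite mxE expr2.
Qed.

Lemma psdmx_add_scalar G w : psdmx G -> 0 <= w -> psdmx (G + w%:M).
Proof.
move=> Gpsd w_ge0 v; rewrite mx_quad_add_scalar addr_ge0 ?mulr_ge0 //.
by apply: sumr_ge0 => p _; apply: sqr_ge0.
Qed.

Lemma psdmx_add_scalar_unitmx G w : psdmx G -> 0 < w -> G + w%:M \in unitmx.
Proof.
move=> Gpsd w_gt0; rewrite unitmxE unitfE; apply/det0P => -[v v_neq0 vM0].
have := mx_quad_add_scalar G w v; rewrite vM0 mul0mx mxE => /esym/eqP.
rewrite paddr_eq0 ?Gpsd ?mulr_ge0 ?sumr_ge0 ?ltW // => [/andP[_]|p _]; last exact: sqr_ge0.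
rewrite mulf_eq0 gt_eqF //= psumr_eq0 => [/allP v0|p _]; last exact: sqr_ge0.
apply/negP: v_neq0; rewrite negbK; apply/eqP/matrixP => i j.
rewrite (ord1 i) mxE; apply/eqP; rewrite -sqrf_eq0.
by apply: v0; rewrite mem_index_enum.
Qed.

(* Completing the square: this is the nonnegativity of the form of [A] at [v - u A^-1]. *)
Lemma psdmx_inv_quad_ge A u v : A^T = A -> psdmx A -> A \in unitmx ->
  2 * (v *m u^T) 0 0 - (v *m A *m v^T) 0 0 <= (u *m invmx A *m u^T) 0 0.
Proof.
move=> Asym Apsd Aunit; set c := u *m invmx A.
have cA : c *m A = u by rewrite mulmxKV.
have cT : c^T = invmx A *m u^T by rewrite trmx_mul trmx_inv Asym.
have uvC : (u *m v^T) 0 0 = (v *m u^T) 0 0.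
  by rewrite -[u]trmxK -trmx_mul mxE trmxK.
have subE (B C : 'M[R]_1) : (B - C) 0 0 = B 0 0 - C 0 0 by rewrite !mxE.
have := Apsd (v - c).
rewrite linearB /= !mulmxBl !mulmxBr cA cT !mulmxA (mulmxK Aunit) -/c !subE uvC.
lra.
Qed.

End PsdMatrix.

Section PsdKernel.
Variable R : realType.
Local Open Scope classical_set_scope.

Definition psd_kernel (T : Type) (k : T -> T -> R) :=
  forall n (Y : 'I_n -> T) (b : 'I_n -> R), 0 <= qform b (fun p q => k (Y p) (Y q)).

Lemma eq_psd_kernel T (k k' : T -> T -> R) :
  (forall y z, k y z = k' y z) -> psd_kernel k -> psd_kernel k'.
Proof.
move=> kk' kpsd n Y b.
by rewrite (_ : (fun p q => _) = fun p q => k (Y p) (Y q)) //; do 2 apply/funext=> ? /=.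
Qed.

Lemma psd_kernel_rank1 T (f : T -> R) : psd_kernel (fun y z => f y * f z).
Proof. by move=> n Y b; rewrite qform_rank1 sqr_ge0. Qed.

Lemma psd_kernel_sum T I (r : seq I) (P : pred I) (k : I -> T -> T -> R) :
  (forall j, P j -> psd_kernel (k j)) ->
  psd_kernel (fun y z => \sum_(j <- r | P j) k j y z).
Proof. by move=> kpsd n Y b; rewrite qform_sum sumr_ge0 // => j /kpsd. Qed.

Lemma psd_kernelZ T c (k : T -> T -> R) :
  0 <= c -> psd_kernel k -> psd_kernel (fun y z => c * k y z).
Proof. by move=> c_ge0 kpsd n Y b; rewrite qformZ mulr_ge0. Qed.

Lemma psd_kernel_conj T (f : T -> R) (k : T -> T -> R) :
  psd_kernel k -> psd_kernel (fun y z => f y * f z * k y z).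
Proof.
by move=> kpsd n Y b; rewrite (qform_conj _ (f \o Y) (fun p q => k (Y p) (Y q))).
Qed.

Lemma psd_kernel_lim T (k_ : nat -> T -> T -> R) (k : T -> T -> R) :
  (forall N, psd_kernel (k_ N)) ->
  (forall y z, (fun N => k_ N y z) @ \oo --> k y z) -> psd_kernel k.
Proof.
move=> kpsd kcvg n Y b.
have qcvg : (fun N => qform b (fun p q => k_ N (Y p) (Y q))) @ \oo -->
            qform b (fun p q => k (Y p) (Y q)).
  apply: cvg_big => //; first exact: add_continuous.
  move=> p _; apply: cvg_big => //; first exact: add_continuous.
  by move=> q _; apply: cvgM; [exact: cvg_cst | exact: kcvg].
by apply: (cvgr_to_ge qcvg); apply: nearW => N; apply: kpsd.
Qed.

Lemma psd_kernel_diag_ge0 T (k : T -> T -> R) y :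
  psd_kernel k -> 0 <= k y y.
Proof.
move=> kpsd; have := kpsd 1%N (fun=> y) (fun=> 1).
by rewrite /qform !big_ord1 !mul1r.
Qed.

Lemma psdmx_kernel T (k : T -> T -> R) n (Y : 'I_n -> T) :
  psd_kernel k -> psdmx (\matrix_(p, q) k (Y p) (Y q)).
Proof.
move=> kpsd v; rewrite mx_qformE (_ : (fun p q => _) = fun p q => k (Y p) (Y q)) //.
by do 2 apply/funext=> ? /=; rewrite mxE.
Qed.

Definition rdot d (y z : 'rV[R]_d) : R := \sum_i y ord0 i * z ord0 i.

Lemma psd_kernel_rdotX d m : psd_kernel (fun y z : 'rV[R]_d => rdot y z ^+ m).
Proof.
apply: (eq_psd_kernel (k := fun y z : 'rV[R]_d => \sum_(f : {ffun 'I_m -> 'I_d})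
  (\prod_t y ord0 (f t)) * (\prod_t z ord0 (f t)))); last first.
  by apply: psd_kernel_sum => f _; apply: psd_kernel_rank1.
move=> y z; rewrite /rdot -[in RHS](card_ord m) -prodr_const bigA_distr_bigA /=.
by apply: eq_bigr => f _; rewrite -big_split.
Qed.

Lemma psd_kernel_exp_rdot d c :
  0 <= c -> psd_kernel (fun y z : 'rV[R]_d => expR (c * rdot y z)).
Proof.
move=> c_ge0.
apply: (psd_kernel_lim (k_ := fun N y z => series (exp_coeff (c * rdot y z)) N)).
  move=> N; apply: (eq_psd_kernel
    (k := fun y z : 'rV[R]_d => \sum_(m < N) (c ^+ m / m`!%:R) * rdot y z ^+ m)).
    move=> y z; rewrite /series /= big_mkord; apply: eq_bigr => m _.
    by rewrite /exp_coeff /= exprMn; ring.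
  apply: psd_kernel_sum => m _; apply: psd_kernelZ; last exact: psd_kernel_rdotX.
  by rewrite divr_ge0 ?exprn_ge0.
by move=> y z; apply: is_cvg_series_exp_coeff.
Qed.

End PsdKernel.

Section SquaredExponentialKernel.
Variables (R : realType) (s0sq l : R).
Implicit Types y z : 'rV[R]_2.

Lemma sqdist_ge0 y z : 0 <= sqdist y z.
Proof. by apply: sumr_ge0 => i _; apply: sqr_ge0. Qed.

Lemma sqdistC y z : sqdist y z = sqdist z y.
Proof. by apply: eq_bigr => i _; rewrite -sqrrN opprB. Qed.

Lemma sqdist_rdot y z : sqdist y z = rdot y y + rdot z z - 2 * rdot y z.
Proof.
rewrite /sqdist /rdot mulr_sumr -big_split -sumrB /=.
by apply: eq_bigr => i _; ring.
Qed.

Lemma se_kernelC y z : se_kernel s0sq l y z = se_kernel s0sq l z y.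
Proof. by rewrite /se_kernel /dist2 sqdistC. Qed.

Lemma se_kernel_diag y : se_kernel s0sq l y y = s0sq.
Proof.
rewrite /se_kernel /dist2 /sqdist big1 => [|i _]; last by rewrite subrr expr0n.
by rewrite sqrtr0 expr0n /= oppr0 mul0r expR0 mulr1.
Qed.

Lemma se_kernel_rdot y z :
  se_kernel s0sq l y z = s0sq * (expR (- rdot y y / (2 * l ^+ 2)) *
    expR (- rdot z z / (2 * l ^+ 2)) * expR ((l ^+ 2)^-1 * rdot y z)).
Proof.
rewrite /se_kernel /dist2 sqr_sqrtr ?sqdist_ge0 // sqdist_rdot -!expRD invfM.
by congr (_ * expR _); set t := l ^- 2; field.
Qed.

Lemma se_kernel_psd : 0 <= s0sq -> psd_kernel (se_kernel s0sq l).
Proof.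
move=> s0_ge0; apply: eq_psd_kernel => [y z|]; first by rewrite se_kernel_rdot.
apply: psd_kernelZ => //; apply: psd_kernel_conj.
by apply: psd_kernel_exp_rdot; rewrite invr_ge0 sqr_ge0.
Qed.

End SquaredExponentialKernel.

Section PosteriorVariance.
Variables (R : realType) (k : 'rV[R]_2 -> 'rV[R]_2 -> R) (w2 : R).
Hypotheses (kC : forall y z, k y z = k z y) (kpsd : psd_kernel k) (w2_gt0 : 0 < w2).
Variables (n : nat) (X : 'I_n -> 'rV[R]_2) (i : 'I_n) (m : nat).
Hypothesis fiber_card : #|[set j | X j == X i]| = m.

Let ind j : R := (X j == X i)%:R.

Lemma fiber_sum (F : 'rV[R]_2 -> R) : \sum_j ind j * F (X j) = m%:R * F (X i).
Proof.
under eq_bigr do rewrite mulr_natl mulrb.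
rewrite -big_mkcond (eq_bigr (fun=> F (X i))) => [|j /eqP-> //].
rewrite sumr_const -fiber_card mulr_natl; congr (_ *+ _).
by apply: eq_card => j; rewrite inE.
Qed.

Lemma post_var_le_fiber x :
  post_var k w2 X x <= k x x - m%:R * k x (X i) ^+ 2 / (m%:R * k (X i) (X i) + w2).
Proof.
set G := \matrix_(p, q) k (X p) (X q).
set u := \row_p k x (X p).
set D := m%:R * k (X i) (X i) + w2.
have D_gt0 : 0 < D by rewrite ltr_wpDl ?mulr_ge0 ?psd_kernel_diag_ge0.
set a := k x (X i) / D; set v := \row_j (a * ind j).
have col_u : \col_q k (X q) x = u^T by apply/matrixP => p q; rewrite !mxE kC.
have Gsym : G^T = G by apply/matrixP => p q; rewrite !mxE kC.
have Gpsd : psdmx G := psdmx_kernel X kpsd.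
have vu : (v *m u^T) 0 0 = m%:R * a * k x (X i).
  rewrite mxE -mulrA -(fiber_sum (fun z => a * k x z)); apply: eq_bigr => j _.
  by rewrite !mxE; ring.
have vMv : (v *m (G + w2%:M) *m v^T) 0 0 = m%:R * a ^+ 2 * D.
  have vGv : qform (v 0) (fun p q => G p q) = m%:R ^+ 2 * a ^+ 2 * k (X i) (X i).
    transitivity (\sum_p ind p * (m%:R * (a ^+ 2 * k (X p) (X i)))).
      apply: eq_bigr => p _; rewrite -(fiber_sum (fun z => a ^+ 2 * k (X p) z)).
      by rewrite mulr_sumr; apply: eq_bigr => q _; rewrite !mxE; ring.
    by rewrite (fiber_sum (fun y => m%:R * (a ^+ 2 * k y (X i)))); ring.
  have vv : \sum_p v 0 p ^+ 2 = m%:R * a ^+ 2.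
    rewrite -(fiber_sum (fun=> a ^+ 2)); apply: eq_bigr => p _.
    by rewrite mxE /ind; case: (X p == X i) => /=; ring.
  by rewrite mx_quad_add_scalar mx_qformE vGv vv /D; ring.
have Msym : (G + w2%:M)^T = G + w2%:M by rewrite linearD /= tr_scalar_mx Gsym.
have := psdmx_inv_quad_ge u v Msym (psdmx_add_scalar Gpsd (ltW w2_gt0))
  (psdmx_add_scalar_unitmx Gpsd w2_gt0).
have -> : 2 * (v *m u^T) 0 0 - (v *m (G + w2%:M) *m v^T) 0 0 =
          m%:R * k x (X i) ^+ 2 / D.
  by rewrite vu vMv /a; field; rewrite gt_eqF.
by rewrite /post_var col_u -/G -/u; lra.
Qed.

End PosteriorVariance.

Lemma le_expR_of_radius (R : realType) (l r P : R) :
  0 < l -> 0 <= r -> 0 < P -> P <= 1 -> r <= l * Num.sqrt (- ln P) ->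
  P <= expR (- r ^+ 2 / l ^+ 2).
Proof.
move=> l_gt0 r_ge0 P_gt0 P_le1 r_le.
have lnP_ge0 : 0 <= - ln P by rewrite oppr_ge0 ln_le0.
have : r ^+ 2 <= (l * Num.sqrt (- ln P)) ^+ 2.
  by rewrite lerXn2r // nnegrE mulr_ge0 ?sqrtr_ge0 ?ltW.
rewrite exprMn sqr_sqrtr // => r2_le.
rewrite -[P in P <= _]lnK ?posrE // ler_expR mulNr lerNr ler_pdivrMr ?exprn_gt0 //.
by rewrite mulrC.
Qed.

Lemma repeated_measurement_bound_le (R : realFieldType) (s0sq w2 Delta m e : R) :
  0 < s0sq -> 0 < w2 -> 0 < m ->
  (1 + w2 / (m * s0sq)) * (1 - Delta / s0sq) <= e ->
  s0sq - m * (s0sq ^+ 2 * e) / (m * s0sq + w2) <= Delta.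
Proof.
move=> s0_gt0 w2_gt0 m_gt0 le_e.
have D_gt0 : 0 < m * s0sq + w2 by rewrite addr_gt0 ?mulr_gt0.
set q := m * s0sq ^+ 2 / (m * s0sq + w2).
have q_ge0 : 0 <= q by rewrite divr_ge0 ?mulr_ge0 ?sqr_ge0 ?ltW.
have qP : q * ((1 + w2 / (m * s0sq)) * (1 - Delta / s0sq)) = s0sq - Delta.
  by rewrite /q; field; rewrite !gt_eqF.
have := ler_wpM2l q_ge0 le_e; rewrite qP.
have -> : m * (s0sq ^+ 2 * e) / (m * s0sq + w2) = q * e by rewrite /q; field; rewrite gt_eqF.
lra.
Qed.

Theorem lemma2 (R : realType) (U : set 'rV[R]_2) (s0sq l w2 Delta : R)
    (n : nat) (X : 'I_n -> 'rV[R]_2) (x : 'rV[R]_2) (i : 'I_n)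
    (nsuff : nat) (r : R) :
  0 < s0sq -> 0 < l -> 0 < w2 ->
  0 < Delta -> Delta < s0sq ->
  U x -> (forall j, U (X j)) ->
  dist2 x (X i) = r ->
  (1 <= nsuff)%N ->
  #|[set j : 'I_n | X j == X i]| = nsuff ->
  (1 + w2 / (nsuff%:R * s0sq)) * (1 - Delta / s0sq) <= 1 ->
  r <= l * Num.sqrt (- ln ((1 + w2 / (nsuff%:R * s0sq)) * (1 - Delta / s0sq))) ->
  MSE (se_kernel s0sq l) w2 X x <= Delta.
Proof.
move=> s0_gt0 l_gt0 w2_gt0 _ Delta_lt _ _ dist_r nsuff_gt0 card P_le1 r_le.
have := post_var_le_fiber (se_kernelC s0sq l) (se_kernel_psd l (ltW s0_gt0)) w2_gt0 card x.
have kxi : se_kernel s0sq l x (X i) = s0sq * expR (- r ^+ 2 / (2 * l ^+ 2)).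
  by rewrite /se_kernel dist_r.
rewrite /MSE !se_kernel_diag kxi => /le_trans; apply.
have half_sum : - r ^+ 2 / (2 * l ^+ 2) + - r ^+ 2 / (2 * l ^+ 2) = - r ^+ 2 / l ^+ 2.
  by field; rewrite gt_eqF.
rewrite exprMn [expR _ ^+ 2]expr2 -expRD half_sum.
apply: repeated_measurement_bound_le => //; first by rewrite ltr0n.
apply: le_expR_of_radius => //; first by rewrite -dist_r sqrtr_ge0.
rewrite mulr_gt0 ?subr_gt0 ?ltr_pdivrMr ?mul1r // ltr_wpDr ?divr_ge0 ?mulr_ge0 ?ler0n ?ltW //.
Qed.
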